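(* Let $k\ge 2$ and $n\ge 1$ be integers, let $\bar{\mathcal{P}}=(\bar p_{i_1\dots i_k})\in\mathbb{R}^{[k,n]}$ be a columnwise-substochastic tensor, let $\mathbf{v}\in\mathbb{R}^n$ be a stochastic vector and let $\alpha\in[0,1)$. If the MLPPR system $(\mathbf{e}^T\mathbf{y})^{k-2}\mathbf{y}-\alpha\bar{\mathcal{P}}\mathbf{y}^{k-1}=\mathbf{v}$ has a nonnegative solution $\mathbf{y}_*\in\mathbb{R}^n_+$, then $\mathbf{y}_*$ belongs to the set $\Delta:=\{\mathbf{y}\in\mathbb{R}^n_+ : \mathbf{y}^T\mathbf{e}\le \varrho\}$, where $\varrho:=(1-\alpha)^{-\frac{1}{k-1}}$, and $\Delta$ is a bounded, closed and convex set.
   Context: $\mathbb{R}^{[k,n]}$ denotes the space of real tensors of order $k$ and dimension $n$ (indices $i_1,\dots,i_k\in\{1,\dots,n\}$). For $\mathcal{P}\in\mathbb{R}^{[k,n]}$ and $\mathbf{y}\in\mathbb{R}^n$, $\mathcal{P}\mathbf{y}^{k-1}\in\mathbb{R}^n$ is the vector with entries $(\mathcal{P}\mathbf{y}^{k-1})_i=\sum_{i_2,\dots,i_k=1}^n p_{i i_2\dots i_k}y_{i_2}\cdots y_{i_k}$. A tensor $\bar{\mathcal{P}}$ is columnwise-substochastic if all its entries are nonnegative and $\sum_{i=1}^n \bar p_{i i_2\dots i_k}\le 1$ for all $i_2,\dots,i_k$. $\mathbf{e}\in\mathbb{R}^n$ is the all-ones vector; a stochastic vector is a nonnegative vector whose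 entries sum to $1$. The MLPPR system is usually written $(I\circ\mathbf{e}^{\circ(k-2)}-\alpha\bar{\mathcal{P}})\mathbf{y}^{k-1}=\mathbf{v}$, where $I\circ\mathbf{e}^{\circ(k-2)}$ is the tensor with entries $\delta_{i_1i_2}$ (outer product of the identity matrix with $k-2$ copies of $\mathbf{e}$), so that $(I\circ\mathbf{e}^{\circ(k-2)})\mathbf{y}^{k-1}=(\mathbf{e}^T\mathbf{y})^{k-2}\mathbf{y}$. *)

From HB Require Import structures.
From mathcomp Require Import all_boot all_order all_algebra.
From mathcomp Require Import all_classical all_reals all_analysis.
Set Implicit Arguments. Unset Strict Implicit. Unset Printing Implicit Defensive.
Import Order.TTheory GRing.Theory Num.Theory.
Import numFieldNormedType.Exports.
Local Open Scope ring_scope.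

(* A real tensor of order k and dimension n: entries P i f, where i is the
   first index i_1 and f : {ffun 'I_(k-1) -> 'I_n} lists (i_2, ..., i_k). *)
Definition tensor (R : Type) (k n : nat) := 'I_n -> {ffun 'I_k.-1 -> 'I_n} -> R.

Definition tapply (R : realType) (k n : nat) (P : tensor R k n) (y : 'rV[R]_n)
  : 'rV[R]_n :=
  \row_i \sum_(f : {ffun 'I_k.-1 -> 'I_n}) P i f * \prod_(j < k.-1) y ord0 (f j).

Definition columnwise_substochastic (R : realType) (k n : nat) (P : tensor R k n) :=
  (forall i f, 0 <= P i f) /\ (forall f, \sum_(i < n) P i f <= 1).

Definition nonneg_vec (R : realType) (n : nat) (y : 'rV[R]_n) :=
  forall i, 0 <= y ord0 i.

Definition stochastic_vec (R : realType) (n : nat) (v : 'rV[R]_n) :=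
  nonneg_vec v /\ \sum_(i < n) v ord0 i = 1.

Definition esum (R : realType) (n : nat) (y : 'rV[R]_n) := \sum_(i < n) y ord0 i.

Definition mlppr_solution (R : realType) (k n : nat) (alpha : R)
  (P : tensor R k n) (v y : 'rV[R]_n) :=
  (esum y) ^+ (k - 2) *: y - alpha *: tapply P y = v.

Definition varrho (R : realType) (k : nat) (alpha : R) : R :=
  powR (1 - alpha) (- (k.-1%:R)^-1).

Definition Delta (R : realType) (k n : nat) (alpha : R) : set 'rV[R]_n :=
  [set y | nonneg_vec y /\ esum y <= varrho k alpha].

From Pilot Require Import Defs.
From HB Require Import structures.
From mathcomp Require Import all_boot all_order all_algebra.
From mathcomp Require Import all_classical all_reals all_analysis.
From mathcomp Require Import lra.
Import Order.TTheory GRing.Theory Num.Theory.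
Import numFieldNormedType.Exports.
Local Open Scope ring_scope.
Local Open Scope classical_set_scope.

(* Summing the MLPPR equation over its coordinates gives
   (e^T y)^(k-1) - alpha e^T (P y^(k-1)) = e^T v = 1, while column
   substochasticity gives e^T (P y^(k-1)) <= (e^T y)^(k-1).  Hence
   (1 - alpha) (e^T y)^(k-1) <= 1, i.e. e^T y <= varrho.  Delta is a cut of
   the nonnegative orthant by a linear inequality, so it is closed, convex,
   and bounded since each coordinate of a point of Delta is at most its sum. *)

Section Esum.
Context {R : realType} {n : nat}.
Implicit Types (x y : 'rV[R]_n) (a : R).

Lemma esumD x y : Defs.esum (x + y) = Defs.esum x + Defs.esum y.
Proof. by rewrite /Defs.esum -big_split; apply: eq_bigr => i _; rewrite mxE. Qed.

Lemma esumB x y : Defs.esum (x - y) = Defs.esum x - Defs.esum y.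
Proof. by rewrite /Defs.esum -sumrB; apply: eq_bigr => i _; rewrite !mxE. Qed.

Lemma esumZ a y : Defs.esum (a *: y) = a * Defs.esum y.
Proof. by rewrite /Defs.esum mulr_sumr; apply: eq_bigr => i _; rewrite mxE. Qed.

Lemma esum_ge0 y : nonneg_vec y -> 0 <= Defs.esum y.
Proof. by move=> y_ge0; apply: sumr_ge0 => i _. Qed.

Lemma coord_le_esum y j : nonneg_vec y -> y ord0 j <= Defs.esum y.
Proof.
by move=> y_ge0; rewrite /Defs.esum (bigD1 j) //= lerDl; apply: sumr_ge0.
Qed.

Lemma esum_continuous : continuous (@Defs.esum R n).
Proof.
rewrite /Defs.esum; elim: (index_enum _) => [|i r IHr].
  by under eq_fun do rewrite big_nil; exact: cst_continuous.
under eq_fun do rewrite big_cons.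
by move=> y; apply: continuousD; [exact: coord_continuous | exact: IHr].
Qed.

End Esum.

Section MlpprSum.
Variables (R : realType) (k n : nat) (P : tensor R k n).
Variables (alpha : R) (v y : 'rV[R]_n).

Lemma exprn_esum :
  Defs.esum y ^+ k.-1 = \sum_(f : {ffun 'I_k.-1 -> 'I_n}) \prod_(j < k.-1) y ord0 (f j).
Proof. by rewrite -(bigA_distr_bigA (fun _ j => y ord0 j)) prodr_const card_ord. Qed.

Lemma esum_tapply_le :
  (forall f, \sum_(i < n) P i f <= 1) -> nonneg_vec y ->
  Defs.esum (tapply P y) <= Defs.esum y ^+ k.-1.
Proof.
move=> colP y_ge0; rewrite exprn_esum /Defs.esum.
under eq_bigr do rewrite mxE.
rewrite exchange_big /=; apply: ler_sum => f _.
rewrite -mulr_suml; apply: ler_piMl => //.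
by apply: prodr_ge0 => j _.
Qed.

Lemma esum_mlppr_solution :
  (2 <= k)%N -> Defs.esum v = 1 -> mlppr_solution alpha P v y ->
  Defs.esum y ^+ k.-1 - alpha * Defs.esum (tapply P y) = 1.
Proof.
by move=> k_ge2 <- <-; rewrite esumB !esumZ -exprSr -subSn // subn2.
Qed.

Lemma mlppr_solution_esum_le :
  (2 <= k)%N -> columnwise_substochastic P -> stochastic_vec v ->
  0 <= alpha -> nonneg_vec y -> mlppr_solution alpha P v y ->
  (1 - alpha) * Defs.esum y ^+ k.-1 <= 1.
Proof.
move=> k_ge2 [_ colP] [_ sum_v] alpha_ge0 y_ge0 sol.
have := esum_mlppr_solution k_ge2 sum_v sol.
have := ler_wpM2l alpha_ge0 (esum_tapply_le colP y_ge0).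
lra.
Qed.

End MlpprSum.

Lemma le_powRN_of_mulr_exprn_le1 (R : realType) (m : nat) (c s : R) :
  (0 < m)%N -> 0 < c -> 0 <= s -> c * s ^+ m <= 1 -> s <= c `^ (- m%:R^-1).
Proof.
move=> m_gt0 c_gt0 s_ge0 csm_le1.
have m_neq0 : m%:R != 0 :> R by rewrite pnatr_eq0 -lt0n.
have root_gt0 : 0 < c `^ m%:R^-1 by exact: powR_gt0.
have sE : s = (s ^+ m) `^ m%:R^-1.
  by rewrite -powR_mulrn // -powRrM mulfV // powRr1.
rewrite powRN -(ler_pM2r root_gt0) mulVf ?gt_eqF // sE.
rewrite -powRM ?exprn_ge0 ?(ltW c_gt0) //.
apply: (@le_trans _ _ (1 `^ m%:R^-1)); last by rewrite powR1.
apply: ge0_ler_powR; rewrite ?nnegrE ?invr_ge0 ?ler0n ?ler01 //.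
  by rewrite mulr_ge0 ?exprn_ge0 ?(ltW c_gt0).
by rewrite mulrC.
Qed.

Section CornerSimplex.
Context {R : realType} {n : nat} (r : R).

Definition corner_simplex : set 'rV[R]_n :=
  [set y | nonneg_vec y /\ Defs.esum y <= r].

Lemma bounded_corner_simplex : bounded_set corner_simplex.
Proof.
exists r; split; first exact: num_real.
move=> M r_lt_M y [y_ge0 y_le_r] /=; apply/ltW/(le_lt_trans _ r_lt_M).
rewrite [leLHS]/Num.Def.normr /= mx_normrE.
apply: bigmax_le; first by rewrite (le_trans (esum_ge0 y y_ge0)).
move=> [i j] _ /=; rewrite (ord1 i) ger0_norm //.
by rewrite (le_trans (coord_le_esum y j y_ge0)).
Qed.

Lemma closed_corner_simplex : closed corner_simplex.
Proof.
have -> : corner_simplex = \bigcap_(i in [set: 'I_n]) [set y : 'rV[R]_n | 0 <= y ord0 i]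
    `&` (@Defs.esum R n @^-1` [set x | x <= r]).
  by apply/seteqP; split => y [y_ge0 y_le_r]; split => // i; [move=> _|];
    exact: y_ge0.
apply: closedI.
  apply: closed_bigI => i _.
  apply: (@preimage_closed _ _ (fun y : 'rV[R]_n => y ord0 i) [set x | 0 <= x]).
    by move=> y _; exact: coord_continuous.
  exact: closed_ge.
apply: preimage_closed; last exact: closed_le.
by move=> y _; exact: esum_continuous.
Qed.

Lemma convex_corner_simplex :
  convex_set (corner_simplex : set (convex_lmodType 'rV[R]_n)).
Proof.
move=> x y l; rewrite !inE => -[x_ge0 x_le_r] [y_ge0 y_le_r].
have l_ge0 : 0 <= l%:inum by [].
have l'_ge0 : 0 <= 1 - l%:inum by rewrite subr_ge0.
change (corner_simplex (l%:inum *: (x : 'rV[R]_n) + (1 - l%:inum) *: (y : 'rV[R]_n))).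
split.
  by move=> i; rewrite !mxE addr_ge0 // mulr_ge0 ?x_ge0 ?y_ge0.
rewrite esumD !esumZ.
apply: le_trans (lerD (ler_wpM2l l_ge0 x_le_r) (ler_wpM2l l'_ge0 y_le_r)) _.
by rewrite -mulrDl addrC subrK mul1r.
Qed.

End CornerSimplex.

Theorem lemma3p4 (R : realType) (k n : nat) (hk : (2 <= k)%N) (hn : (1 <= n)%N)
  (P : tensor R k n) (v : 'rV[R]_n) (alpha : R)
  (hP : columnwise_substochastic P) (hv : stochastic_vec v)
  (ha0 : 0 <= alpha) (ha1 : alpha < 1)
  (ystar : 'rV[R]_n) (hy0 : nonneg_vec ystar) (hsol : mlppr_solution alpha P v ystar) :
  (@Delta R k n alpha) ystar /\
  bounded_set ((@Delta R k n alpha)) /\ closed ((@Delta R k n alpha)) /\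
  convex_set ((@Delta R k n alpha) : set (convex_lmodType 'rV[R]_n)).
Proof.
have -> : Delta k alpha = corner_simplex (varrho k alpha) by [].
have ystar_in : corner_simplex (varrho k alpha) ystar.
  split; first exact: hy0.
  apply: le_powRN_of_mulr_exprn_le1.
  - by rewrite ltn_predRL.
  - by rewrite subr_gt0.
  - exact: esum_ge0 ystar hy0.
  - exact: mlppr_solution_esum_le hk hP hv ha0 hy0 hsol.
split; first exact: ystar_in.
split; first exact: bounded_corner_simplex.
split; first exact: closed_corner_simplex.
exact: convex_corner_simplex.
Qed.
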